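(* Let $G$ be a finite non-abelian group. Then the non-centralizer graph $\Upsilon_G$ is regular if and only if $\beta_G(x)=xZ(G)$ for all $x\in G$.
   Context: For a finite group $G$ and $x\in G$, $C_G(x)=\{y\in G\mid xy=yx\}$ and $Z(G)$ is the center of $G$. The non-centralizer graph $\Upsilon_G$ is the simple graph with vertex set $G$ in which two distinct vertices $x,y$ are adjacent if and only if $C_G(x)\neq C_G(y)$. A graph is regular if all its vertices have the same degree. For $x\in G$, $\beta_G(x)=\{y\in G\mid C_G(y)=C_G(x)\}$. *)

From mathcomp Require Import all_boot all_fingroup all_solvable.
Set Implicit Arguments. Unset Strict Implicit. Unset Printing Implicit Defensive.
Local Open Scope group_scope.

Definition ncg_adj (gT : finGroupType) (G : {group gT}) (x y : gT) : bool :=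
  [&& x \in G, y \in G, x != y & 'C_G[x] != 'C_G[y]].

Definition ncg_deg (gT : finGroupType) (G : {group gT}) (x : gT) : nat :=
  #|[set y in G | ncg_adj G x y]|.

Definition ncg_regular (gT : finGroupType) (G : {group gT}) : Prop :=
  forall x y, x \in G -> y \in G -> ncg_deg G x = ncg_deg G y.

Definition beta (gT : finGroupType) (G : {group gT}) (x : gT) : {set gT} :=
  [set y in G | 'C_G[y] == 'C_G[x]].

(** The vertices of Upsilon_G not adjacent to x are exactly those of beta_G(x),
    so deg x = |G| - |beta_G(x)|.  Since beta_G(1) = Z(G), the graph is regular
    iff every beta_G(x) has |Z(G)| elements; and beta_G(x) always contains the
    coset xZ(G), of that same size, because multiplying by a central element does
    not change centralizers. *)

From mathcomp Require Import all_boot all_fingroup all_solvable.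

Set Implicit Arguments.
Unset Strict Implicit.
Unset Printing Implicit Defensive.

Local Open Scope group_scope.

Section NonCentralizerGraph.

Variables (gT : finGroupType) (G : {group gT}).

Lemma beta_sub x : beta G x \subset G.
Proof. by apply/subsetP => y; rewrite inE => /andP[]. Qed.

Lemma ncg_adj_nbhd x :
  x \in G -> [set y in G | ncg_adj G x y] = G :\: beta G x.
Proof.
move=> xG; apply/setP => y; rewrite !inE /ncg_adj xG.
case: (y \in G); rewrite ?andbF //= andbT (eq_sym 'C_G[y]).
by case: eqVneq => [->|]; rewrite ?eqxx.
Qed.

Lemma ncg_degE x : x \in G -> ncg_deg G x = (#|G| - #|beta G x|)%N.
Proof.
by move=> xG; rewrite /ncg_deg ncg_adj_nbhd // cardsD (setIidPr (beta_sub x)).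
Qed.

Lemma beta1 : beta G 1 = 'Z(G).
Proof.
apply/setP => y; rewrite !inE cent11T setIT; case: (y \in G) => //=.
by rewrite eqEsubset subsetIl /= subsetI subxx sub_cent1.
Qed.

Lemma centralizer_mul_center x z :
  z \in 'Z(G) -> 'C_G[x * z] = 'C_G[x].
Proof.
case/centerP=> _ cGz; apply/setP => g; rewrite !in_setI.
case gG: (g \in G) => //=; have cgz := commute_sym (cGz g gG).
apply/cent1P/cent1P => [cg_xz | cgx]; last exact: commuteM.
by rewrite -(mulgK z x); apply: commuteM; last exact: commuteV.
Qed.

Lemma lcoset_center_sub_beta x : x \in G -> x *: 'Z(G) \subset beta G x.
Proof.
move=> xG; apply/subsetP => _ /lcosetP[z zZ ->].
rewrite inE centralizer_mul_center // eqxx andbT groupM //.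
by case/centerP: zZ.
Qed.

Lemma beta_eq_lcoset_center x :
  x \in G -> (beta G x == x *: 'Z(G)) = (#|beta G x| == #|'Z(G)|).
Proof.
move=> xG; have := subset_leq_card (lcoset_center_sub_beta xG).
rewrite card_lcoset => le_Z_beta.
rewrite eq_sym eqEcard lcoset_center_sub_beta // card_lcoset.
by rewrite eqn_leq le_Z_beta andbT.
Qed.

Lemma ncg_regularE :
  ncg_regular G <-> {in G, forall x, #|beta G x| = #|'Z(G)|}.
Proof.
split=> [reg x xG | cardB x y xG yG]; last by rewrite !ncg_degE // !cardB.
have := reg x 1 xG (group1 G); rewrite !ncg_degE // beta1 => /eqP.
by rewrite eqn_sub2lE ?subset_leq_card ?beta_sub ?center_sub // => /eqP.
Qed.

End NonCentralizerGraph.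

Theorem proposition2p4 (gT : finGroupType) (G : {group gT}) :
  ~~ abelian G ->
  (ncg_regular G <-> forall x, x \in G -> beta G x = x *: 'Z(G)).
Proof.
move=> _; apply: iff_trans (ncg_regularE G) _.
split=> [card_beta | beta_coset] x xG; apply/eqP.
  by rewrite beta_eq_lcoset_center // card_beta.
by rewrite -beta_eq_lcoset_center // beta_coset.
Qed.
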